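(* Let $c\ge 2$ be an integer and $\mathcal{P}$ a finite bias distribution. Consider a single code position: a value $p$ is drawn from $\mathcal{P}$; $\ell$ pirates ($2\le\ell\le c$) receive bits $b_1,\dots,b_\ell\in\{0,1\}$ that are, given $p$, independent with $\Pr(b_i=1)=p$; the pirates output $y\in\{0,1,?\}$ via a (possibly randomized) strategy depending only on $(b_1,\dots,b_\ell)$ (so that, given the bits, $y$ is independent of $p$) and satisfying: if $b_1=\dots=b_\ell$ then $y=b_1$. For $I\subset\{1,\dots,\ell\}$ with $x:=|I|$, $1\le x\le\ell-1$, let $\mathcal{B}_I$ be the event that $b_i=1$ exactly for $i\in I$, and $\mathcal{B}'_I=\mathcal{B}_I\wedge(y=1)$. Then the following are equivalent: (a) for every $2\le\ell\le c$, every such $I$, and every strategy with $\Pr(\mathcal{B}'_I)>0$, the conditional expectation $$\sum_{p}\Pr(p\mid\mathcal{B}'_I)\bigl(x\sigma(p)-(\ell-x)\sigma(1-p)\bigr)$$ (sum over the possible outputs $p$ of $\mathcal{P}$) equals $0$; (b) $\mathcal{P}$ is $c$-indistinguishable.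
   Context: A finite bias distribution is a probability distribution $\mathcal{P}$ supported on a finite subset of $(0,1)$ that is symmetric: it outputs $a$ and $1-a$ with the same probability. $E_p$ is expectation over $p\sim\mathcal{P}$. $\sigma(p)=\sqrt{(1-p)/p}$; for integers $\ell\ge1$, $0\le x\le\ell$, $f_{\ell,x}(p)=p^x(1-p)^{\ell-x}(x\sigma(p)-(\ell-x)\sigma(1-p))$ and $R_{\ell,x}=\max\{0,E_p[f_{\ell,x}(p)]\}$. $\mathcal{P}$ is $c$-indistinguishable if $\sum_{x=1}^{\ell-1}\binom{\ell}{x}R_{\ell,x}=0$ for all $2\le\ell\le c$. *)

From HB Require Import structures.
From mathcomp Require Import all_boot all_order all_algebra.
From mathcomp Require Import reals.
Set Implicit Arguments. Unset Strict Implicit. Unset Printing Implicit Defensive.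
Import Order.TTheory GRing.Theory Num.Theory.
Local Open Scope ring_scope.

Section Defs.
Variable R : realType.

(* A finite bias distribution is given by its (duplicate-free) support s
   together with the probability weights w; expectation over p ~ P is
   \sum_(a <- s) w a * f a. *)
Definition is_bias_dist (s : seq R) (w : R -> R) : Prop :=
  [/\ uniq s,
      (forall a, a \in s -> 0 < a < 1),
      (forall a, a \in s -> 0 < w a),
      \sum_(a <- s) w a = 1 &
      (forall a, a \in s -> (1 - a) \in s /\ w (1 - a) = w a)].

Definition Ep (s : seq R) (w : R -> R) (f : R -> R) : R :=
  \sum_(a <- s) w a * f a.

Definition sigma (p : R) : R := Num.sqrt ((1 - p) / p).

Definition f_lx (l x : nat) (p : R) : R :=
  p ^+ x * (1 - p) ^+ (l - x) *
  (x%:R * sigma p - (l - x)%:R * sigma (1 - p)).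

Definition R_lx (s : seq R) (w : R -> R) (l x : nat) : R :=
  Num.max 0 (Ep s w (f_lx l x)).

Definition c_indistinguishable (s : seq R) (w : R -> R) (c : nat) : Prop :=
  forall l : nat, (2 <= l <= c)%N ->
    \sum_(1 <= x < l) 'C(l, x)%:R * R_lx s w l x = 0.

(* Pirate strategy for l pirates: r b y = probability of outputting y
   (Some true = 1, Some false = 0, None = ?) given the received bits b. *)
Definition valid_strategy (l : nat)
    (r : {ffun 'I_l -> bool} -> option bool -> R) : Prop :=
  [/\ (forall b y, 0 <= r b y),
      (forall b, \sum_(y : option bool) r b y = 1) &
      (forall (b : {ffun 'I_l -> bool}) (v : bool), (forall i, b i = v) -> r b (Some v) = 1)].

Definition bits_prob (l : nat) (p : R) (b : {ffun 'I_l -> bool}) : R :=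
  \prod_(i < l) (if b i then p else 1 - p).

Definition bits_of (l : nat) (I : {set 'I_l}) : {ffun 'I_l -> bool} :=
  [ffun i => i \in I].

Definition joint_B' (w : R -> R) (l : nat) (I : {set 'I_l})
    (r : {ffun 'I_l -> bool} -> option bool -> R) (a : R) : R :=
  w a * bits_prob a (bits_of I) * r (bits_of I) (Some true).

Definition prob_B' (s : seq R) (w : R -> R) (l : nat) (I : {set 'I_l})
    (r : {ffun 'I_l -> bool} -> option bool -> R) : R :=
  \sum_(a <- s) joint_B' w I r a.

Definition cond_exp (s : seq R) (w : R -> R) (l : nat) (I : {set 'I_l})
    (r : {ffun 'I_l -> bool} -> option bool -> R) : R :=
  \sum_(a <- s) (joint_B' w I r a / prob_B' s w I r) *
     ((#|I|)%:R * sigma a - (l - #|I|)%:R * sigma (1 - a)).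

End Defs.

(* The conditional expectation in (a) factors as Pr(y = 1 | B_I) / Pr(B'_I)
   times E_p[f_{l,x}(p)], so (a) says that E_p[f_{l,x}(p)] vanishes whenever
   some strategy makes B'_I possible; the strategy "output 1 unless all bits
   are 0" does so for every I.  On the other hand c-indistinguishability says
   E_p[f_{l,x}(p)] <= 0 for 0 < x < l, and the symmetry p <-> 1 - p of the
   bias distribution gives E_p[f_{l,l-x}] = - E_p[f_{l,x}], so these
   expectations are in fact 0. *)
From HB Require Import structures.
From mathcomp Require Import all_boot all_order all_algebra.
From mathcomp Require Import reals.
From mathcomp Require Import ring lra zify.
Import Order.TTheory GRing.Theory Num.Theory.
Local Open Scope ring_scope.

Lemma exists_set_of_card (T : finType) (n : nat) :
  (n <= #|T|)%N -> exists A : {set T}, #|A| = n.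
Proof.
case/card_geqP=> t [t_uniq <- _]; exists [set x in t].
by rewrite cardsE; apply/card_uniqP.
Qed.

Section Bits.
Context {R : realType}.

Lemma bits_probE (l : nat) (I : {set 'I_l}) (a : R) :
  bits_prob a (bits_of I) = a ^+ #|I| * (1 - a) ^+ (l - #|I|).
Proof.
rewrite /bits_prob (bigID (mem I)) /=.
rewrite (eq_bigr (fun _ => a)) => [|i iI]; last by rewrite ffunE iI.
rewrite [X in _ * X](eq_bigr (fun _ => 1 - a)) => [|i iNI]; last first.
  by rewrite ffunE (negbTE iNI).
rewrite !prodr_const; congr (_ * _ ^+ _).
have -> : (l - #|I| = #|~: I|)%N by rewrite -{1}(card_ord l) -(cardsC I) addKn.
by apply: eq_card => i; rewrite !inE.
Qed.

Lemma bits_prob_gt0 (l : nat) (a : R) (b : {ffun 'I_l -> bool}) :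
  0 < a < 1 -> 0 < bits_prob a b.
Proof.
move=> /andP[a_gt0 a_lt1]; apply: prodr_gt0 => i _.
by case: (b i); rewrite ?subr_gt0.
Qed.

Lemma f_lx_reflect (l x : nat) (a : R) :
  (x <= l)%N -> f_lx l (l - x) (1 - a) = - f_lx l x a.
Proof.
move=> x_le_l; rewrite /f_lx subKn // (_ : 1 - (1 - a) = a); last by ring.
ring.
Qed.

End Bits.

Section BiasDistribution.
Context {R : realType} {s : seq R} {w : R -> R}.

Lemma c_indistinguishableP (c : nat) :
  c_indistinguishable s w c <->
  forall l, (2 <= l <= c)%N -> forall x, (0 < x < l)%N -> Ep s w (f_lx l x) <= 0.
Proof.
have R_lx_ge0 l x : 0 <= R_lx s w l x by rewrite /R_lx le_max lexx.
have R_lx_eq0 l x : (R_lx s w l x == 0) = (Ep s w (f_lx l x) <= 0).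
  rewrite /R_lx maxEle; case: leP => [Ep_ge0|/ltW ->]; rewrite ?eqxx //.
  by rewrite eq_le Ep_ge0 andbT.
split=> [indist l l_range x x_range | Ep_le0 l l_range].
- have /eqP := indist l l_range.
  rewrite big_nat psumr_eq0 => [/allP/(_ x)|y _]; last by rewrite mulr_ge0 ?R_lx_ge0.
  rewrite mem_index_iota x_range => /(_ isT) /=.
  rewrite mulf_eq0 pnatr_eq0 R_lx_eq0 eqn0Ngt bin_gt0.
  by case/andP: x_range => _ /ltnW ->.
- rewrite big_nat big1 // => x x_range.
  have /eqP -> : R_lx s w l x == 0 by rewrite R_lx_eq0 Ep_le0.
  by rewrite mulr0.
Qed.

Hypothesis bias : is_bias_dist s w.

Lemma Ep_reflect (F : R -> R) : Ep s w F = Ep s w (fun a => F (1 - a)).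
Proof.
case: bias => s_uniq _ _ _ s_sym.
have oneminus_inj : injective (fun a : R => 1 - a) by move=> a b /= ?; lra.
have s_perm : perm_eq s (map (fun a => 1 - a) s).
  apply: uniq_perm => //; first by rewrite map_inj_uniq.
  move=> a; apply/idP/mapP => [sa | [b /s_sym[sb _] ->] //].
  by exists (1 - a); [case: (s_sym a sa) | rewrite opprB addrC subrK].
rewrite /Ep (perm_big _ s_perm) big_map big_seq [RHS]big_seq.
by apply: eq_bigr => a /s_sym[_ ->].
Qed.

Lemma Ep_f_lx_reflect (l x : nat) :
  (x <= l)%N -> Ep s w (f_lx l (l - x)) = - Ep s w (f_lx l x).
Proof.
move=> x_le_l; rewrite Ep_reflect /Ep -sumrN.
by apply: eq_bigr => a _; rewrite f_lx_reflect // mulrN.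
Qed.

Lemma Ep_gt0 (F : R -> R) : (forall a, a \in s -> 0 < F a) -> 0 < Ep s w F.
Proof.
case: bias => s_uniq _ w_gt0 w_sum1 _ F_gt0.
have [a sa] : exists a, a \in s.
  case: s w_sum1 {s_uniq F_gt0} => [|a t _]; last by exists a; rewrite mem_head.
  by rewrite big_nil => /eqP; rewrite eq_sym oner_eq0.
have term_gt0 b : b \in s -> 0 < w b * F b.
  by move=> sb; rewrite mulr_gt0 ?w_gt0 ?F_gt0.
rewrite /Ep (bigD1_seq a) //= ltr_wpDr ?term_gt0 //.
by rewrite big_seq_cond sumr_ge0 // => b /andP[/term_gt0/ltW].
Qed.

Lemma c_indistinguishable_Ep_f_lx_eq0 {c l x : nat} :
  c_indistinguishable s w c -> (2 <= l <= c)%N -> (0 < x < l)%N ->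
  Ep s w (f_lx l x) = 0.
Proof.
move=> /c_indistinguishableP Ep_le0 l_range x_range.
apply/eqP; rewrite eq_le Ep_le0 //= -oppr_le0 -Ep_f_lx_reflect; last by lia.
by apply: Ep_le0 => //; lia.
Qed.

Lemma prob_B'E (l : nat) (I : {set 'I_l}) r :
  prob_B' s w I r =
  r (bits_of I) (Some true) * Ep s w (fun a => bits_prob a (bits_of I)).
Proof.
rewrite /prob_B' /Ep mulr_sumr; apply: eq_bigr => a _.
by rewrite /joint_B'; ring.
Qed.

Lemma cond_expE (l : nat) (I : {set 'I_l}) r :
  cond_exp s w I r =
  r (bits_of I) (Some true) / prob_B' s w I r * Ep s w (f_lx l #|I|).
Proof.
rewrite /cond_exp /Ep mulr_sumr; apply: eq_bigr => a _.
by rewrite /joint_B' bits_probE /f_lx; ring.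
Qed.

End BiasDistribution.

Definition one_unless_all_zero (R : realType) (l : nat)
    (b : {ffun 'I_l -> bool}) (y : option bool) : R :=
  (y == Some [exists i, b i])%:R.

Lemma one_unless_all_zero_valid (R : realType) (l : nat) :
  (0 < l)%N -> valid_strategy (@one_unless_all_zero R l).
Proof.
move=> l_gt0; split=> [b y | b | b v b_const]; rewrite /one_unless_all_zero //.
  by rewrite (bigD1 (Some [exists i, b i])) //= eqxx big1 ?addr0 // => y /negbTE ->.
have -> : [exists i, b i] = v.
  apply/existsP/idP => [[i] | v_true]; first by rewrite b_const.
  by exists (Ordinal l_gt0); rewrite b_const.
by rewrite eqxx.
Qed.

Lemma one_unless_all_zero_bits_of (R : realType) (l : nat) (I : {set 'I_l}) :
  I != set0 -> @one_unless_all_zero R l (bits_of I) (Some true) = 1.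
Proof.
case/set0Pn=> i iI; rewrite /one_unless_all_zero.
by have -> : [exists i, bits_of I i] by apply/existsP; exists i; rewrite ffunE.
Qed.

Theorem proposition1 (R : realType) (c : nat) (s : seq R) (w : R -> R) :
  (2 <= c)%N -> is_bias_dist s w ->
  ((forall (l : nat), (2 <= l <= c)%N ->
     forall I : {set 'I_l}, (1 <= #|I| <= l - 1)%N ->
     forall r : {ffun 'I_l -> bool} -> option bool -> R,
       valid_strategy r -> 0 < prob_B' s w I r -> cond_exp s w I r = 0)
   <-> c_indistinguishable s w c).
Proof.
move=> _ bias; split=> [cond_exp0 | indist]; last first.
  move=> l l_range I I_range r _ _.
  rewrite cond_expE (c_indistinguishable_Ep_f_lx_eq0 bias indist l_range).
    by rewrite mulr0.
  by lia.
apply/c_indistinguishableP => l l_range x x_range.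
have [I cardI] := @exists_set_of_card 'I_l x ltac:(rewrite card_ord; lia).
pose r := @one_unless_all_zero R l.
have r_I : r (bits_of I) (Some true) = 1.
  by apply: one_unless_all_zero_bits_of; rewrite -card_gt0 cardI; lia.
have prob_gt0 : 0 < prob_B' s w I r.
  rewrite prob_B'E r_I mul1r; apply: Ep_gt0 => // a sa.
  by apply: bits_prob_gt0; case: bias => _ /(_ a sa).
have I_range : (1 <= #|I| <= l - 1)%N by rewrite cardI; lia.
have r_valid : valid_strategy r by apply: one_unless_all_zero_valid; lia.
have := cond_exp0 l l_range I I_range r r_valid prob_gt0.
rewrite cond_expE r_I mul1r cardI => /eqP.
by rewrite mulf_eq0 invr_eq0 (gt_eqF prob_gt0) => /eqP ->.
Qed.
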